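(* Let $d\ge3$ and suppose $\mathbf z_1,\dots,\mathbf z_d\in\mathbb R^d$ are linearly independent (and $\boldsymbol\alpha_1,\boldsymbol\alpha_2$ are well defined). Then \[|\boldsymbol\alpha_1-\boldsymbol\alpha_2|=\frac{\det\underline\Lambda_{2,d-2}\cdot\det\Lambda_{1,d}}{\det\underline\Lambda_{1,d-1}\cdot\det\underline\Lambda_{2,d-1}}.\]
   Context: $|\cdot|$ is the Euclidean norm. For $\mathbf x=(x_1,\dots,x_d)\in\mathbb R^d$ write $\underline{\mathbf x}=(x_1,\dots,x_{d-1})$. Let $\pi_d=\{\mathbf x\in\mathbb R^d:x_d=1\}$. For vectors $\mathbf z_1,\dots,\mathbf z_d$: $\det\Lambda_{1,d}=|\det(\mathbf z_1,\dots,\mathbf z_d)|$; for $1\le l\le d-1$, $\det\underline\Lambda_{k,l}=|\underline{\mathbf z_k}\wedge\dots\wedge\underline{\mathbf z_{k+l-1}}|$, the $l$-dimensional volume of the parallelepiped spanned by $\underline{\mathbf z_k},\dots,\underline{\mathbf z_{k+l-1}}$. When $\underline{\mathbf z_k},\dots,\underline{\mathbf z_{k+d-2}}$ are linearly independent, $\boldsymbol\alpha_k$ denotes the unique point of $\pi_d$ orthogonal to $\mathbf z_k,\dots,\mathbf z_{k+d-2}$; here $\boldsymbol\alpha_1\perp\mathbf z_1,\dots,\mathbf z_{d-1}$ and $\boldsymbol\alpha_2\perp\mathbf z_2,\dots,\mathbf z_d$. *)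

(* Ambient dimension d = n.+1 ; vectors are row vectors 'rV[R]_(n.+1).
   Vectors z_1, ..., z_d are given as a function z : nat -> 'rV[R]_(n.+1),
   using the paper's 1-based indices (only z 1, ..., z d are relevant). *)
From HB Require Import structures.
From mathcomp Require Import all_boot all_order all_algebra.
Set Implicit Arguments. Unset Strict Implicit. Unset Printing Implicit Defensive.
Import Order.TTheory GRing.Theory Num.Theory.
Local Open Scope ring_scope.

Definition dotv (R : rcfType) (m : nat) (u v : 'rV[R]_m) : R := (u *m v^T) 0 0.
Definition enorm (R : rcfType) (m : nat) (v : 'rV[R]_m) : R := Num.sqrt (dotv v v).

Definition under (R : rcfType) (n : nat) (x : 'rV[R]_n.+1) : 'rV[R]_n :=
  \row_(j < n) x 0 (widen_ord (leqnSn n) j).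

Definition lastc (R : rcfType) (n : nat) (x : 'rV[R]_n.+1) : R := x 0 ord_max.

Definition vecs_mx (R : rcfType) (m l k : nat) (f : nat -> 'rV[R]_m) : 'M[R]_(l, m) :=
  \matrix_(i < l, j < m) f (k + i)%N 0 j.

(* l-dimensional volume of the parallelepiped spanned by the rows of M:
   |v_1 /\ ... /\ v_l| = sqrt (Gram determinant) *)
Definition pvol (R : rcfType) (l m : nat) (M : 'M[R]_(l, m)) : R :=
  Num.sqrt (\det (M *m M^T)).

(* det underline-Lambda_{k,l} = | under z_k /\ ... /\ under z_{k+l-1} | *)
Definition detLu (R : rcfType) (n : nat) (z : nat -> 'rV[R]_n.+1) (k l : nat) : R :=
  pvol (vecs_mx l k (fun i => under (z i))).

(* det Lambda_{1,d} = |det(z_1, ..., z_d)| *)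
Definition detL1d (R : rcfType) (n : nat) (z : nat -> 'rV[R]_n.+1) : R :=
  `|\det (vecs_mx n.+1 1 z)|.

(* Let v be alpha_1 - alpha_2 with its last coordinate (which is 0) dropped,
   so |alpha_1 - alpha_2| = |v| and v is orthogonal to the rows of
   W = (under z_2, ..., under z_{d-1}).  Bordering the Gram matrix W W^T by v
   on one side and by v or under z_1 on the other gives block-triangular
   matrices, whence |v|^2 det(U_1)^2 = <v, under z_1>^2 det(W W^T) with
   U_1 = (under z_1, ..., under z_{d-1}).  Moreover <v, under z_1> equals
   -<alpha_2, z_1>, and replacing the last column of (z_1, ..., z_d) by the
   inner products with alpha_2 (a column operation, as the last coordinate of
   alpha_2 is 1) shows |det(z_1, ..., z_d)| = |<alpha_2, z_1>| |det U_2|. *)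

From HB Require Import structures.
From mathcomp Require Import all_boot all_order all_algebra.
From mathcomp Require Import ring zify.
Set Implicit Arguments. Unset Strict Implicit. Unset Printing Implicit Defensive.
Import Order.TTheory GRing.Theory Num.Theory.
Local Open Scope ring_scope.

Section Volumes.
Variable R : rcfType.

Lemma dotvE k (x y : 'rV[R]_k) : dotv x y = \sum_i x 0 i * y 0 i.
Proof. by rewrite /dotv !mxE; apply: eq_bigr => i _; rewrite mxE. Qed.

Lemma dotvC k (x y : 'rV[R]_k) : dotv x y = dotv y x.
Proof. by rewrite !dotvE; apply: eq_bigr => i _; rewrite mulrC. Qed.

Lemma dotvBl k (x y w : 'rV[R]_k) : dotv (x - y) w = dotv x w - dotv y w.
Proof. by rewrite !dotvE -sumrB; apply: eq_bigr => i _; rewrite !mxE mulrBl. Qed.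

Lemma dotvv_eq0 k (x : 'rV[R]_k) : dotv x x = 0 -> x = 0.
Proof.
rewrite dotvE => /eqP; rewrite psumr_eq0 => [/allP x2_0|i _]; last first.
  by rewrite -expr2 sqr_ge0.
apply/rowP => i; rewrite mxE.
by have := x2_0 i (mem_index_enum _); rewrite /= -expr2 sqrf_eq0 => /eqP.
Qed.

Lemma dotv_under k (x y : 'rV[R]_k.+1) :
  dotv x y = dotv (under x) (under y) + lastc x * lastc y.
Proof.
by rewrite !dotvE big_ord_recr /=; congr (_ + _); apply: eq_bigr => i _; rewrite !mxE.
Qed.

Lemma dotv_lastc0 k (x y : 'rV[R]_k.+1) :
  lastc x = 0 -> dotv x y = dotv (under x) (under y).
Proof. by move=> x0; rewrite dotv_under x0 mul0r addr0. Qed.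

Lemma lastcB k (x y : 'rV[R]_k.+1) : lastc (x - y) = lastc x - lastc y.
Proof. by rewrite /lastc !mxE. Qed.

Lemma vecs_mxS l m k (f : nat -> 'rV[R]_m) :
  vecs_mx l.+1 k f = col_mx (f k) (vecs_mx l k.+1 f).
Proof.
apply/matrixP => i j; rewrite !mxE; case: splitP => [i0 ->|i' ->].
  by rewrite ord1 addn0.
by rewrite /vecs_mx mxE add1n addnS.
Qed.

Lemma orth_vecs_mx l m k (x : 'rV[R]_m) (f : nat -> 'rV[R]_m) :
  (forall i, (i < l)%N -> dotv x (f (k + i)%N) = 0) ->
  x *m (vecs_mx l k f)^T = 0.
Proof.
move=> x_orth; apply/rowP => i; rewrite [RHS]mxE -(x_orth i (ltn_ord i)) dotvE mxE.
by apply: eq_bigr => j _; rewrite !mxE.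
Qed.

Lemma pvol_square k (A : 'M[R]_k) : pvol A = `|\det A|.
Proof. by rewrite /pvol det_mulmx det_tr -expr2 sqrtr_sqr. Qed.

Lemma row_free_dsubmx l1 l2 m (A : 'M[R]_(l1, m)) (B : 'M[R]_(l2, m)) :
  row_free (col_mx A B) -> row_free B.
Proof.
move=> freeAB; apply: inj_row_free => x xB0.
have /eqP : row_mx 0 x *m col_mx A B = 0 by rewrite mul_row_col mul0mx xB0 addr0.
by rewrite mulmx_free_eq0 // -row_mx0 => /eqP /eq_row_mx [].
Qed.

Lemma gram_det_neq0 l m (A : 'M[R]_(l, m)) : row_free A -> \det (A *m A^T) != 0.
Proof.
move=> freeA; rewrite -unitfE -unitmxE -row_free_unit; apply: inj_row_free => x xAA0.
have /dotvv_eq0 xA0 : dotv (x *m A) (x *m A) = 0.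
  by rewrite /dotv trmx_mul mulmxA -(mulmxA x) xAA0 mul0mx mxE.
by apply/eqP; rewrite -(mulmx_free_eq0 _ freeA) xA0.
Qed.

Lemma det_gram_border l m (x y : 'rV[R]_m) (W : 'M[R]_(l, m)) :
  x *m W^T = 0 ->
  \det (col_mx x W *m (col_mx y W)^T) = dotv x y * \det (W *m W^T).
Proof.
by move=> xW0; rewrite tr_col_mx mul_col_row xW0 det_lblock det_mx11.
Qed.

Lemma dotvv_det_gram k (v y : 'rV[R]_k.+1) (W : 'M[R]_(k, k.+1)) :
  row_free W -> v *m W^T = 0 ->
  dotv v v * \det (col_mx y W) ^+ 2 = dotv v y ^+ 2 * \det (W *m W^T).
Proof.
move=> freeW vW0; have g_neq0 := gram_det_neq0 freeW.
have detNy := det_gram_border y vW0; have detNv := det_gram_border v vW0.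
rewrite det_mulmx det_tr in detNy; rewrite det_mulmx det_tr -expr2 in detNv.
apply: (mulIf g_neq0); rewrite mulrAC -detNv -exprMn detNy; ring.
Qed.

Definition under_mx n : 'M[R]_(n.+1, n) :=
  \matrix_(i, j) (i == widen_ord (leqnSn n) j)%:R.

Lemma vecs_mx_under l n k (f : nat -> 'rV[R]_n.+1) :
  vecs_mx l k (fun i => under (f i)) = vecs_mx l k f *m under_mx n.
Proof.
apply/matrixP => i j; rewrite !mxE (bigD1 (widen_ord (leqnSn n) j)) //= big1.
  by rewrite !mxE eqxx mulr1 addr0.
by move=> t /negbTE tj; rewrite !mxE tj mulr0.
Qed.

Lemma det_under_border n (a : 'rV[R]_n.+1) :
  lastc a = 1 -> `|\det (row_mx a^T (under_mx n))| = 1.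
Proof.
move=> a_last; rewrite (expand_det_row _ ord_max) (bigD1 ord0) //= big1.
  rewrite addr0 /cofactor.
  have -> : row' ord_max (col' ord0 (row_mx a^T (under_mx n))) = 1%:M.
    apply/matrixP => i j; rewrite !mxE.
    case: splitP => [j0|j' /= [/val_inj <-]]; first by rewrite ord1 lift0.
    by rewrite mxE -val_eqE /= /bump leqNgt ltn_ord add0n.
  rewrite (det1 R n) mulr1 normrM normrX normrN1 expr1n mulr1 mxE.
  by case: splitP => [j0 _|//]; rewrite mxE ord1 -[a 0 _]/(lastc a) a_last normr1.
move=> j /negbTE j0; rewrite mxE; case: splitP => [j1 jE|j' _].
  by move: j0; rewrite -val_eqE /= jE ord1.
by rewrite mxE -val_eqE /= gtn_eqF ?mul0r.
Qed.

(* Right multiplication by [row_mx a^T (under_mx n)] puts the inner products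
   with [a] in the first column, which vanishes below the first row. *)
Lemma det_orth_last n (a x : 'rV[R]_n.+1) (Y : 'M[R]_(n, n.+1)) :
  lastc a = 1 -> Y *m a^T = 0 ->
  `|\det (col_mx x Y)| = `|dotv x a| * `|\det (Y *m under_mx n)|.
Proof.
move=> a_last Ya0; rewrite -[LHS]mulr1 -(det_under_border a_last) -normrM.
by rewrite -det_mulmx mul_col_row Ya0 det_ublock det_mx11 normrM.
Qed.

End Volumes.

(* d = n.+1 >= 3 *)
Theorem lemma5 (R : rcfType) (n : nat) (hn : (2 <= n)%N)
  (z : nat -> 'rV[R]_n.+1)
  (* z_1, ..., z_d linearly independent *)
  (hind : row_free (vecs_mx n.+1 1 z))
  (* alpha_1, alpha_2 well defined *)
  (hwd1 : row_free (vecs_mx n 1 (fun i => under (z i))))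
  (hwd2 : row_free (vecs_mx n 2 (fun i => under (z i))))
  (alpha1 alpha2 : 'rV[R]_n.+1)
  (ha1 : lastc alpha1 = 1)
  (ha1o : forall j : nat, (1 <= j <= n)%N -> dotv alpha1 (z j) = 0)
  (ha2 : lastc alpha2 = 1)
  (ha2o : forall j : nat, (2 <= j <= n.+1)%N -> dotv alpha2 (z j) = 0) :
  enorm (alpha1 - alpha2) =
    (detLu z 2 (n - 1) * detL1d z) / (detLu z 1 n * detLu z 2 n).
Proof.
have [m n_eq] : exists m, n = m.+2 by exists n.-2; lia.
subst n; set u := fun i => under (z i); rewrite -/u in hwd1 hwd2.
set v := under (alpha1 - alpha2).
have lastc_v : lastc (alpha1 - alpha2) = 0 by rewrite lastcB ha1 ha2 subrr.
have dotv_v j : dotv v (u j) = dotv alpha1 (z j) - dotv alpha2 (z j).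
  by rewrite -dotvBl (dotv_lastc0 _ lastc_v).
have -> : enorm (alpha1 - alpha2) = Num.sqrt (dotv v v).
  by rewrite /enorm (dotv_lastc0 _ lastc_v).
set W := vecs_mx m.+1 2 u; set U1 := vecs_mx m.+2 1 u; set U2 := vecs_mx m.+2 2 u.
have U1E : U1 = col_mx (u 1%N) W := vecs_mxS _ _ _.
have vW0 : v *m W^T = 0.
  by apply: orth_vecs_mx => i lti; rewrite dotv_v ha1o ?ha2o ?subrr //; lia.
have freeW : row_free W by apply: (@row_free_dsubmx _ 1 _ _ (u 1%N)); rewrite -U1E.
have gram := dotvv_det_gram (u 1%N) freeW vW0; rewrite -U1E in gram.
have detZ : `|\det (vecs_mx m.+3 1 z)| = `|dotv v (u 1%N)| * `|\det U2|.
  rewrite vecs_mxS (det_orth_last (a := alpha2)) //.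
    by rewrite -vecs_mx_under dotv_v ha1o // dotvC sub0r normrN.
  apply: trmx_inj; rewrite trmx_mul trmxK trmx0.
  by apply: orth_vecs_mx => i lti; rewrite ha2o //; lia.
have [dU1 dU2] : \det U1 != 0 /\ \det U2 != 0.
  by rewrite -!unitfE -!unitmxE -!row_free_unit.
have -> : dotv v v = (dotv v (u 1%N) / \det U1) ^+ 2 * \det (W *m W^T).
  by apply: (mulIf (expf_neq0 2 dU1)); rewrite gram; field.
rewrite /detLu /detL1d subn1 /= !pvol_square -/W -/U1 -/U2 detZ.
rewrite sqrtrM ?sqr_ge0 // sqrtr_sqr normf_div.
by rewrite [pvol W]/pvol; field; rewrite ?normr_eq0 ?dU1 ?dU2.
Qed.
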